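(* Let $n\ge1$ and let $\mathcal{ORCT}_n$ be the semigroup of all full contractions of $[n]=\{1,\dots,n\}$ that are either order-preserving or order-reversing. Let $\textnormal{E}(\mathcal{ORCT}_n)=\{\alpha\in\mathcal{ORCT}_n:\alpha^2=\alpha\}$ be its set of idempotents. Then $|\textnormal{E}(\mathcal{ORCT}_n)|=\frac{n(n+1)}{2}$.
   Context: $\mathcal{T}_n$ is the semigroup (under composition) of all maps $[n]\to[n]$. A map $\alpha\in\mathcal{T}_n$ is a contraction if $|x\alpha-y\alpha|\le |x-y|$ for all $x,y\in[n]$; it is order-preserving if $x\le y$ implies $x\alpha\le y\alpha$, and order-reversing if $x\le y$ implies $x\alpha\ge y\alpha$. $\mathcal{ORCT}_n$ is the set of contractions that are order-preserving or order-reversing. *)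

From mathcomp Require Import all_boot all_order all_algebra.
Set Implicit Arguments. Unset Strict Implicit. Unset Printing Implicit Defensive.

(* [n] = {1,...,n} is modelled by 'I_n = {0,...,n-1} (order/distances preserved).
   T_n = {ffun 'I_n -> 'I_n}. *)

Definition dist (x y : nat) : nat := (x - y) + (y - x).

Definition is_contraction n (a : {ffun 'I_n -> 'I_n}) : bool :=
  [forall x : 'I_n, forall y : 'I_n, dist (a x) (a y) <= dist x y].

Definition is_order_preserving n (a : {ffun 'I_n -> 'I_n}) : bool :=
  [forall x : 'I_n, forall y : 'I_n, (x <= y)%N ==> (a x <= a y)%N].

Definition is_order_reversing n (a : {ffun 'I_n -> 'I_n}) : bool :=
  [forall x : 'I_n, forall y : 'I_n, (x <= y)%N ==> (a y <= a x)%N].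

Definition ORCT n : {set {ffun 'I_n -> 'I_n}} :=
  [set a | is_contraction a && (is_order_preserving a || is_order_reversing a)].

(* composition in T_n: x (a b) = (x a) b  *)
Definition tcomp n (a b : {ffun 'I_n -> 'I_n}) : {ffun 'I_n -> 'I_n} :=
  [ffun x => b (a x)].

Definition E_ORCT n : {set {ffun 'I_n -> 'I_n}} :=
  [set a in ORCT n | tcomp a a == a].

From mathcomp Require Import all_boot all_order all_algebra.
From mathcomp Require Import zify.
Set Implicit Arguments. Unset Strict Implicit. Unset Printing Implicit Defensive.

(* An idempotent in ORCT_n is the clamp x |-> max(i, min(x, j)) onto an
   interval [i, j]. In the order-preserving case, a contraction moves by at
   most one between neighbours, so its image is the whole interval between the
   images of the endpoints; idempotence fixes that interval pointwise and
   monotonicity pushes everything outside it onto the nearest end. An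
   order-reversing idempotent is constant, since applying it twice to the two
   endpoints reverses their order back. Hence idempotents correspond to the
   n(n+1)/2 pairs i <= j. *)

Definition clamp n (i j : 'I_n) : {ffun 'I_n -> 'I_n} :=
  [ffun x : 'I_n => if (x < i)%N then i else if (j < x)%N then j else x].

Lemma clampE n (i j x : 'I_n) : (i <= j)%N ->
  (clamp i j x : nat) = maxn i (minn x j).
Proof. by move=> le_ij; rewrite ffunE; case: ifP => ?; last case: ifP => ?; lia. Qed.

Lemma is_contractionP n (a : {ffun 'I_n -> 'I_n}) :
  reflect (forall x y, dist (a x) (a y) <= dist x y) (is_contraction a).
Proof.
by apply: (iffP forallP) => [H x y | H x]; [move/forallP: (H x) | apply/forallP].
Qed.

Lemma is_order_preservingP n (a : {ffun 'I_n -> 'I_n}) :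
  reflect {homo a : x y / (x <= y)%N} (is_order_preserving a).
Proof.
apply: (iffP forallP) => [H x y | H x]; first by move/forallP: (H x) => /(_ y)/implyP.
by apply/forallP => y; apply/implyP/H.
Qed.

Lemma is_order_reversingP n (a : {ffun 'I_n -> 'I_n}) :
  reflect {homo a : x y /~ (x <= y)%N} (is_order_reversing a).
Proof.
apply: (iffP forallP) => [H x y | H x]; first by move/forallP: (H y) => /(_ x)/implyP.
by apply/forallP => y; apply/implyP/H.
Qed.

Lemma tcomp_idemP n (a : {ffun 'I_n -> 'I_n}) :
  reflect (forall x, a (a x) = a x) (tcomp a a == a).
Proof.
apply: (iffP eqP) => [aa_a x | aa_a]; last by apply/ffunP => x; rewrite ffunE.
by rewrite -[in RHS]aa_a ffunE.
Qed.

Lemma clamp_E_ORCT n (i j : 'I_n) : (i <= j)%N -> clamp i j \in E_ORCT n.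
Proof.
move=> le_ij; rewrite !inE; apply/andP; split; first (apply/andP; split).
- by apply/is_contractionP => x y; rewrite /dist !clampE //; lia.
- by apply/orP; left; apply/is_order_preservingP => x y le_xy; rewrite !clampE //; lia.
- by apply/tcomp_idemP => x; apply/val_inj; rewrite /= !clampE //; lia.
Qed.

Lemma clamp_inj m (i j i' j' : 'I_m.+1) : (i <= j)%N -> (i' <= j')%N ->
  clamp i j = clamp i' j' -> (i, j) = (i', j').
Proof.
move=> le_ij le_ij' eq_clamp.
have := congr1 (fun f : {ffun _ -> _} => val (f ord0)) eq_clamp.
have := congr1 (fun f : {ffun _ -> _} => val (f ord_max)) eq_clamp.
rewrite /= !clampE //= => e1 e0.
have := ltn_ord j; have := ltn_ord j' => lt_j' lt_j.
by congr pair; apply/val_inj => /=; lia.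
Qed.

Lemma nat_intermediate_value (f : nat -> nat) k y :
  (forall l, l < k -> f l.+1 <= (f l).+1) -> f 0 <= y <= f k ->
  exists2 z, z <= k & f z = y.
Proof.
elim: k => [|k IHk] step le_y; first by exists 0 => //; apply/eqP; rewrite eqn_leq.
have [le_y_fk | lt_fk_y] := leqP y (f k).
  have [z le_zk fz] := IHk (fun l lt_lk => step l (ltnW lt_lk)) ltac:(lia).
  by exists z => //; apply: leqW.
by exists k.+1 => //; have := step k (ltnSn k); lia.
Qed.

Lemma contraction_image_interval m (a : {ffun 'I_m.+1 -> 'I_m.+1}) (y : 'I_m.+1) :
  is_contraction a -> (a ord0 <= y <= a ord_max)%N -> exists x, a x = y.
Proof.
move=> /is_contractionP contr le_y.
pose f k : nat := a (inord k).
have step l : l < m -> f l.+1 <= (f l).+1.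
  by move=> lt_lm; have := contr (inord l) (inord l.+1); rewrite /f /dist !inordK; lia.
have inord0 : inord 0 = ord0 :> 'I_m.+1 by apply/val_inj; rewrite /= inordK.
have inordm : inord m = ord_max :> 'I_m.+1 by apply/val_inj; rewrite /= inordK.
have [|z _ fz] := @nat_intermediate_value f m y step; first by rewrite /f inord0 inordm.
by exists (inord z); apply/val_inj.
Qed.

Lemma order_preserving_idem_clamp m (a : {ffun 'I_m.+1 -> 'I_m.+1}) :
  is_contraction a -> is_order_preserving a -> tcomp a a == a ->
  a = clamp (a ord0) (a ord_max).
Proof.
move=> contr /is_order_preservingP mono /tcomp_idemP aa_a.
have fixed (y : 'I_m.+1) : (a ord0 <= y <= a ord_max)%N -> a y = y.
  by case/(contraction_image_interval contr) => x <-; rewrite aa_a.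
have a0_le (x : 'I_m.+1) : (a ord0 <= a x)%N by apply: mono.
have le_am (x : 'I_m.+1) : (a x <= a ord_max)%N by apply: mono; rewrite /= -ltnS.
apply/ffunP => x; apply/val_inj; rewrite /= clampE //.
have a0_le_ax := a0_le x; have ax_le_am := le_am x; have a0_le_am := a0_le ord_max.
have [lt_x0|ge_x0] := ltnP x (a ord0).
  by have := mono _ _ (ltnW lt_x0); rewrite aa_a; lia.
have [lt_mx|le_xm] := ltnP (a ord_max) x.
  by have := mono _ _ (ltnW lt_mx); rewrite aa_a; lia.
by rewrite fixed ?ge_x0 //; lia.
Qed.

Lemma order_reversing_idem_clamp m (a : {ffun 'I_m.+1 -> 'I_m.+1}) :
  is_order_reversing a -> tcomp a a == a -> a = clamp (a ord0) (a ord0).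
Proof.
move=> /is_order_reversingP anti /tcomp_idemP aa_a.
have le_m0 : (a ord_max <= a ord0)%N by apply: anti.
have := anti _ _ le_m0; rewrite !aa_a => le_0m.
apply/ffunP => x; apply/val_inj; rewrite /= clampE //.
have ax_le_a0 := anti x ord0 (leq0n x).
have am_le_ax : (a ord_max <= a x)%N by apply: anti; rewrite /= -ltnS.
lia.
Qed.

Lemma E_ORCT_clamp m :
  E_ORCT m.+1 = [set clamp p.1 p.2 | p in [set p : 'I_m.+1 * 'I_m.+1 | (p.1 <= p.2)%N]].
Proof.
apply/setP => a; apply/idP/imsetP => [|[[i j]]]; last first.
  by rewrite inE => /= le_ij ->; apply: clamp_E_ORCT.
rewrite !inE => /andP[/andP[contr /orP[mono|anti]] idem].
  exists (a ord0, a ord_max); last exact: order_preserving_idem_clamp.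
  by rewrite inE /=; apply/is_order_preservingP.
by exists (a ord0, a ord0); [rewrite inE | apply: order_reversing_idem_clamp].
Qed.

Lemma card_ord_leq_pairs n : #|[set p : 'I_n * 'I_n | (p.1 <= p.2)%N]| = 'C(n.+1, 2).
Proof.
rewrite -sum1dep_card.
rewrite -(pair_big_dep xpredT (fun i j : 'I_n => (i <= j)%N) (fun _ _ => 1)) /=.
under eq_bigr => i _.
  have -> : \sum_(j < n | (i <= j)%N) 1 = \sum_(i <= j < n) 1.
    by rewrite big_geq_mkord; apply: eq_bigl.
  rewrite sum_nat_const_nat muln1.
  over.
rewrite -bin2_sum big_nat_recl // -(big_mkord xpredT (fun i => n - i)) big_nat_rev /=.
by apply: congr_big_nat => // i /andP[_ /andP[_ lt_in]]; lia.
Qed.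

Theorem theorem4 (n : nat) : 1 <= n -> #|E_ORCT n| = (n * (n + 1)) %/ 2.
Proof.
case: n => [//|m] _.
rewrite E_ORCT_clamp card_in_imset; last first.
  by move=> [i j] [i' j']; rewrite !inE; apply: clamp_inj.
by rewrite card_ord_leq_pairs bin2 -divn2 mulnC addn1.
Qed.
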